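(* Let $p$ be an odd prime and $b,c\in\mathbb Z$. Then $$\binom{p-1}{p-k}_{b,c}\equiv u_k(-b,c)\pmod p\qquad\text{for all } k=0,1,\ldots,p-1.$$
   Context: For $n\in\mathbb N$ and $b,c\in\mathbb Z$, the generalized trinomial coefficients $\binom{n}{k}_{b,c}$ ($k\in\mathbb Z$) are the integers defined by $\left(x+b+\frac{c}{x}\right)^n=\sum_{k\in\mathbb Z}\binom{n}{k}_{b,c}x^k$. For $A,B\in\mathbb Z$, the Lucas sequence $u_n=u_n(A,B)$ ($n\in\mathbb N$) is defined by $u_0=0$, $u_1=1$, and $u_{n+1}=Au_n-Bu_{n-1}$ for $n\ge1$. *)

From mathcomp Require Import all_boot all_order all_algebra.
Set Implicit Arguments. Unset Strict Implicit. Unset Printing Implicit Defensive.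
Import Order.TTheory GRing.Theory Num.Theory.
Local Open Scope ring_scope.

(* Generalized trinomial coefficient binom(n,k)_{b,c}: the coefficient of x^k in
   (x + b + c/x)^n.  Since x^n (x + b + c/x)^n = (x^2 + b x + c)^n, this is the
   coefficient of x^(n+k) in the polynomial (X^2 + b X + c)^n (0 if n+k < 0). *)
Definition gtrinom (n : nat) (k : int) (b c : int) : int :=
  match (n%:Z + k)%R with
  | Posz m => (('X^2 + b%:P * 'X + c%:P) ^+ n : {poly int})`_m
  | Negz _ => 0
  end.

Fixpoint lucas_u2 (A B : int) (n : nat) : int * int :=
  match n with
  | 0%N => (0, 1)
  | m.+1 => let '(x, y) := lucas_u2 A B m in (y, A * y - B * x)
  end.
Definition lucas_u (A B : int) (n : nat) : int := (lucas_u2 A B n).1.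

Lemma lucas_u_0 A B : lucas_u A B 0 = 0. Proof. by []. Qed.
Lemma lucas_u_1 A B : lucas_u A B 1 = 1. Proof. by []. Qed.
Lemma lucas_u_rec A B n :
  lucas_u A B n.+2 = A * lucas_u A B n.+1 - B * lucas_u A B n.
Proof. by rewrite /lucas_u /=; case: (lucas_u2 A B n). Qed.

(* Let Q = X^2 + bX + c over F_p.  The trinomial coefficients of order p - 1 are
   coefficients of Q^(p-1), read downwards from its leading one.  By Frobenius
   Q^p = X^(2p) + b X^p + c has no monomials of degree strictly between p and
   2p, so comparing coefficients in Q^p = Q^(p-1) Q shows that, read downwards,
   the coefficients of Q^(p-1) obey u_(k+2) = -b u_(k+1) - c u_k; they start
   with 0 (above the degree) and 1 (the leading coefficient), as u_k(-b, c). *)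

From mathcomp Require Import all_boot all_order all_algebra.
From mathcomp Require Import zify.
Import Order.TTheory GRing.Theory Num.Theory.
Local Open Scope ring_scope.

Lemma lucas_u_unique (R : nzRingType) (A B : int) (N : nat) (v : nat -> R) :
    v 0%N = 0 -> v 1%N = 1 ->
    (forall n, (n.+2 <= N)%N -> v n.+2 = A%:~R * v n.+1 - B%:~R * v n) ->
  forall n, (n <= N)%N -> v n = (lucas_u A B n)%:~R.
Proof.
move=> v0 v1 vrec.
have pair n : (n.+1 <= N)%N ->
    v n = (lucas_u A B n)%:~R /\ v n.+1 = (lucas_u A B n.+1)%:~R.
  elim: n => [|n IH] hn; first by rewrite v0 v1.
  have [vn vn1] := IH (ltnW hn); split=> //.
  by rewrite vrec // vn vn1 lucas_u_rec rmorphB !rmorphM.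
by case=> [|n] hn; [rewrite v0 | case: (pair n hn)].
Qed.

Definition trinomial {R : nzRingType} (b c : R) : {poly R} :=
  'X^2 + b%:P * 'X + c%:P.

Lemma size_exp_monic (R : nzRingType) (q : {poly R}) (n : nat) :
  q \is monic -> size (q ^+ n) = ((size q).-1 * n).+1.
Proof.
move=> q_monic; elim: n => [|n IH]; first by rewrite expr0 size_poly1 muln0.
rewrite exprSr size_Mmonic ?monic_neq0 ?monic_exp // IH mulnS.
have : (0 < size q)%N by rewrite size_poly_gt0 monic_neq0.
by case: (size q) => // n0 _; lia.
Qed.

Section Trinomial.
Variables (R : nzRingType) (b c : R).

Let size_linear_part : (size (b%:P * 'X + c%:P)%R < size ('X^2 : {poly R}))%N.
Proof.
rewrite size_polyXn size_MXaddC; case: ifP => // _.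
by rewrite ltnS size_polyC; case: (b != 0).
Qed.

Lemma size_trinomial : size (trinomial b c) = 3.
Proof. by rewrite /trinomial -addrA (size_polyDl size_linear_part) size_polyXn. Qed.

Lemma monic_trinomial : trinomial b c \is monic.
Proof. by rewrite monicE /trinomial -addrA (lead_coefDl size_linear_part) lead_coefXn. Qed.

End Trinomial.

Lemma map_trinomial (aR rR : nzRingType) (f : {rmorphism aR -> rR}) (b c : aR) :
  map_poly f (trinomial b c) = trinomial (f b) (f c).
Proof. by rewrite /trinomial !rmorphD rmorphM /= map_polyXn map_polyX !map_polyC. Qed.

Section TrinomialPchar.
Variables (R : comNzRingType) (p : nat) (b c : R).
Hypothesis charRp : p \in [pchar R].
Let P := trinomial b c ^+ p.-1.

Lemma trinomial_exp_pchar :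
  trinomial b c ^+ p = 'X^(2 * p) + (b ^+ p)%:P * 'X^p + (c ^+ p)%:P.
Proof.
have charp : [pchar {poly R}].-nat p.
  by rewrite pnatE ?(pcharf_prime charRp) // pchar_poly.
by rewrite /trinomial !exprDn_pchar // -exprM exprMn -!rmorphXn.
Qed.

Lemma coef_trinomial_exp_pchar n : (p < n < 2 * p)%N -> (trinomial b c ^+ p)`_n = 0.
Proof.
move=> /andP[p_lt_n n_lt_2p].
rewrite trinomial_exp_pchar !coefD coefXn coefCM coefXn coefC.
by rewrite (ltn_eqF n_lt_2p) (gtn_eqF p_lt_n) (gtn_eqF (leq_ltn_trans (leq0n p) p_lt_n))
  mulr0 !addr0.
Qed.

Lemma coef_trinomial_exp_pred_rec n : (p < n.+2 < 2 * p)%N ->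
  P`_n = - b * P`_n.+1 - c * P`_n.+2.
Proof.
move=> n_range; have := coef_trinomial_exp_pchar _ n_range.
have -> : trinomial b c ^+ p = P * trinomial b c.
  by rewrite -exprSr prednK // prime_gt0 // (pcharf_prime charRp).
rewrite /trinomial !mulrDr !coefD coefMXn mulrA coefMX !coefMC /= subn2 /=.
move/eqP; rewrite -addrA addr_eq0 => /eqP ->.
by rewrite opprD !mulNr (mulrC b) (mulrC c).
Qed.

End TrinomialPchar.

Lemma coef_trinomial_exp_pred (R : comNzRingType) (p : nat) (B C : int) (k : nat) :
    p \in [pchar R] -> (k <= p.-1)%N ->
  (trinomial B%:~R C%:~R ^+ p.-1 : {poly R})`_((2 * p).-1 - k) =
    (lucas_u (- B) C k)%:~R.
Proof.
move=> charRp k_le; have p_gt1 := prime_gt1 (pcharf_prime charRp).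
set P := _ ^+ p.-1.
have P_monic : P \is monic by rewrite monic_exp ?monic_trinomial.
have size_P : size P = (2 * p).-1.
  by rewrite size_exp_monic ?monic_trinomial // size_trinomial; lia.
apply: (@lucas_u_unique _ (- B) C p.-1 (fun i => P`_((2 * p).-1 - i)) _ _ _ k k_le).
- by rewrite subn0 nth_default ?size_P.
- by rewrite -(monicP P_monic) lead_coefE size_P subn1.
move=> n n_le /=; rewrite (@coef_trinomial_exp_pred_rec _ _ _ _ charRp); last by lia.
have -> : ((2 * p).-1 - n.+2).+2 = ((2 * p).-1 - n)%N by lia.
have -> : ((2 * p).-1 - n.+2).+1 = ((2 * p).-1 - n.+1)%N by lia.
by rewrite rmorphN.
Qed.

Theorem lemma4p2 (p : nat) (b c : int) :
  prime p -> odd p ->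
  forall k : nat, (k <= p.-1)%N ->
    (gtrinom p.-1 (p%:Z - k%:Z) b c = lucas_u (- b) c k %[mod p%:Z])%Z.
Proof.
move=> p_prime _ k k_le; have p_gt0 := prime_gt0 p_prime.
have index_eq : (p.-1%:Z + (p%:Z - k%:Z))%R = ((2 * p).-1 - k)%N :> int by lia.
rewrite /gtrinom index_eq -/(trinomial b c).
have charFp := pchar_Fp p_prime.
apply/eqP; rewrite eqz_mod_dvd (dvdz_pcharf charFp) rmorphB subr_eq0 /=; apply/eqP.
by rewrite -(coef_map (intmul 1)) rmorphXn /= map_trinomial coef_trinomial_exp_pred.
Qed.
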